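(* Let $\Gamma\subseteq A$ be $\Bbbk$-algebras, $\sim$ an equivalence relation on $\mathrm{cfs}(\Gamma)$, with $\Gamma$ a Harish-Chandra block subalgebra of $A$, and let $V$ be a Harish-Chandra block module. Then: (i) if $\mathcal D\subseteq\mathrm{cfs}(\Gamma)/{\sim}$ is $\prec$-closed (i.e. $B\in\mathcal D$ and $B\prec C$ imply $C\in\mathcal D$), then $V(\mathcal D):=\bigoplus_{B\in\mathcal D}V(B)$ is an $A$-submodule of $V$; (ii) $V=\bigoplus_{\mathcal D\in(\mathrm{cfs}(\Gamma)/{\sim})/\Delta}V(\mathcal D)$ as $A$-modules; (iii) if $V$ is indecomposable and $B\in\mathrm{Supp}(V)$, then $\mathrm{Supp}(V)$ is contained in the $\Delta$-class of $B$; (iv) if $V$ is irreducible and $B\in\mathrm{Supp}(V)$, then $\mathrm{Supp}(V)$ is contained in the $\nabla$-class of $B$.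
   Context: $\mathrm{cfs}(\Gamma)$: maximal two-sided ideals $\mathfrak m$ with $\dim\Gamma/\mathfrak m<\infty$. For a class $B$, $\mathcal W(B)=\{\mathfrak m_1\cdots\mathfrak m_k:k\ge0,\mathfrak m_i\in B\}$; for a $\Gamma$-module $V$, $V(B)=\{v:\mathfrak mv=0$ for some $\mathfrak m\in\mathcal W(B)\}$; $V$ is a block module if $V=\bigoplus_BV(B)$; $\mathrm{Supp}(V)=\{B:V(B)\ne0\}$. A Harish-Chandra block module is an $A$-module that is a block module over $\Gamma$. $\Gamma$ is a Harish-Chandra block subalgebra of $A$ if $A/A\mathfrak m$ is a block module for every $B$ and $\mathfrak m\in\mathcal W(B)$. $\prec$ is the preorder on $\mathrm{cfs}(\Gamma)/{\sim}$ generated by $B\prec C$ whenever $C\in\mathrm{Supp}(A/A\mathfrak m)$ for some $\mathfrak m\in B$; $\Delta$ is the equivalence relation generated by $\prec$ and $\nabla$ the equivalence relation induced by $\prec$ ($B\nabla C$ iff $B\prec C$ and $C\prec B$). *)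

From mathcomp Require Import all_boot all_algebra.
From Stdlib Require Import Relations.
From Stdlib Require List.
Set Implicit Arguments. Unset Strict Implicit. Unset Printing Implicit Defensive.
Import GRing.Theory.
Local Open Scope ring_scope.

Section Defs.
Variables (k : fieldType) (A : algType k).

Definition is_subalgebra (G : A -> Prop) : Prop :=
  [/\ G 0, G 1, (forall x y, G x -> G y -> G (x + y)),
      (forall (c : k) x, G x -> G (c *: x)) & (forall x y, G x -> G y -> G (x * y))].

Definition is_ideal (G : A -> Prop) (I : A -> Prop) : Prop :=
  [/\ forall x, I x -> G x, I 0,
      (forall x y, I x -> I y -> I (x - y)),
      (forall g x, G g -> I x -> I (g * x)) & (forall g x, G g -> I x -> I (x * g))].

Definition is_maximal_ideal (G : A -> Prop) (I : A -> Prop) : Prop :=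
  [/\ is_ideal G I, I <> G &
      forall J, is_ideal G J -> (forall x, I x -> J x) -> J = I \/ J = G].

Definition finite_codim (G : A -> Prop) (I : A -> Prop) : Prop :=
  exists n (e : 'I_n -> A), (forall i, G (e i)) /\
    forall g, G g -> exists c : 'I_n -> k, I (g - \sum_(i < n) c i *: e i).

Definition cfs (G : A -> Prop) (I : A -> Prop) : Prop :=
  is_maximal_ideal G I /\ finite_codim G I.

Definition equiv_on (P : (A -> Prop) -> Prop) (R : (A -> Prop) -> (A -> Prop) -> Prop) :=
  [/\ (forall m, P m -> R m m),
      (forall m n, P m -> P n -> R m n -> R n m) &
      (forall m n p, P m -> P n -> P p -> R m n -> R n p -> R m p)].

Variables (G : A -> Prop) (sim : (A -> Prop) -> (A -> Prop) -> Prop).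

Definition isClass (B : (A -> Prop) -> Prop) : Prop :=
  exists m, cfs G m /\ B = (fun n => cfs G n /\ sim m n).

Definition idealMul (I J : A -> Prop) : A -> Prop :=
  fun x => exists n (a b : 'I_n -> A), (forall i, I (a i) /\ J (b i)) /\
                                     x = \sum_(i < n) a i * b i.

Fixpoint iprod (s : seq (A -> Prop)) : A -> Prop :=
  match s with [::] => G | m :: s' => idealMul m (iprod s') end.

Definition Wprod (B : (A -> Prop) -> Prop) (I : A -> Prop) : Prop :=
  exists s : seq (A -> Prop), (forall m, List.In m s -> B m) /\ I = iprod s.

(** Generic Gamma-module theory for a quotient M / N, where M is a k-vector
    space, act : A -> M -> M (only elements of G are used) and N a
    Gamma-stable subspace.  Sets of M/N are represented by their preimages
    in M. For a genuine module V we take N = {0}. *)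
Section Quot.
Variables (M : lmodType k) (act : A -> M -> M) (N : M -> Prop).

Definition comp (B : (A -> Prop) -> Prop) : M -> Prop :=
  fun x => exists I, Wprod B I /\ forall g, I g -> N (act g x).

Definition sumsp (I : Type) (P : I -> Prop) (W : I -> M -> Prop) : M -> Prop :=
  fun x => exists n (j : 'I_n -> I) (w : 'I_n -> M),
    (forall i, P (j i) /\ W (j i) (w i)) /\ N (x - \sum_(i < n) w i).

Definition is_dsum (I : Type) (P : I -> Prop) (W : I -> M -> Prop) : Prop :=
  (forall x, sumsp P W x) /\
  (forall n (j : 'I_n -> I) (w : 'I_n -> M), injective j ->
     (forall i, P (j i) /\ W (j i) (w i)) -> N (\sum_(i < n) w i) ->
     forall i, N (w i)).

Definition block_module : Prop := is_dsum isClass comp.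

Definition Supp (B : (A -> Prop) -> Prop) : Prop :=
  isClass B /\ exists x, comp B x /\ ~ N x.
End Quot.

Definition leftIdeal (m : A -> Prop) : A -> Prop :=
  fun x => exists n (a g : 'I_n -> A), (forall i, m (g i)) /\
                                     x = \sum_(i < n) a i * g i.

Definition lmul : A -> A -> A := fun a x => a * x.

Definition HC_block_subalgebra : Prop :=
  forall B, isClass B -> forall m, Wprod B m ->
    block_module lmul (leftIdeal m).

Definition prec_gen (B C : (A -> Prop) -> Prop) : Prop :=
  isClass B /\ isClass C /\ exists m, B m /\ Supp lmul (leftIdeal m) C.

Definition prec := clos_refl_trans _ prec_gen.
Definition Delta := clos_refl_sym_trans _ prec_gen.
Definition nabla B C := prec B C /\ prec C B.

Section Mod.
Variables (V : lmodType k) (act : A -> V -> V).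

Definition is_Amodule : Prop :=
  [/\ (forall a x y, act a (x + y) = act a x + act a y) /\
      (forall a (c : k) x, act a (c *: x) = c *: act a x),
      (forall a b x, act (a + b) x = act a x + act b x),
      (forall (c : k) a x, act (c *: a) x = c *: act a x),
      (forall x, act 1 x = x) &
      (forall a b x, act (a * b) x = act a (act b x))].

Definition zeroV : V -> Prop := fun x => x = 0.

Definition is_Asubmodule (U : V -> Prop) : Prop :=
  [/\ U 0, (forall x y, U x -> U y -> U (x + y)),
      (forall (c : k) x, U x -> U (c *: x)) &
      (forall a x, U x -> U (act a x))].

Definition nonzero_module : Prop := exists v : V, v <> 0.

Definition indecomposable : Prop :=
  nonzero_module /\
  forall U1 U2, is_Asubmodule U1 -> is_Asubmodule U2 ->
    (forall v, exists u1 u2, U1 u1 /\ U2 u2 /\ v = u1 + u2) ->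
    (forall v, U1 v -> U2 v -> v = 0) ->
    (forall v, U1 v -> v = 0) \/ (forall v, U2 v -> v = 0).

Definition irreducible : Prop :=
  nonzero_module /\
  forall U, is_Asubmodule U -> (forall v, U v -> v = 0) \/ (forall v, U v).

Definition VD (D : ((A -> Prop) -> Prop) -> Prop) : V -> Prop :=
  sumsp zeroV D (comp act zeroV).
End Mod.

End Defs.

(* Fix a class B and m_1, ..., m_k in B.  The crux is that every class C of
   Supp(A/A m_1...m_k) satisfies B ≺ C.  By induction on k: if y is a nonzero
   element of (A/A m_1...m_k)(C) lying in A m_2...m_k, write y = Σ c_i b_i with
   b_i in m_2...m_k; decomposing each c_i in the block module A/A m_1 and
   multiplying on the right by b_i expresses y as a sum of components of
   A/A m_1...m_k whose classes lie in Supp(A/A m_1), and directness forces C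
   to be one of them.
   If now x in V(B) is killed by m_1...m_k, decomposing a in A/A m_1...m_k
   writes a x as a sum of elements of the V(C) with B ≺ C, so V(D) is a
   submodule for every ≺-closed D; this is (i).  Parts (ii)-(iv) apply (i) to
   the Δ-classes, to their complements and to the ≺-successors of B, together
   with the fact that sums of components over disjoint sets of classes meet
   only in 0. *)

From Pilot Require Import Defs.
From HB Require Import structures.
From mathcomp Require Import all_boot all_algebra.
From mathcomp Require Import boolp.
From Stdlib Require Import Relations.
From Stdlib Require List.
Set Implicit Arguments. Unset Strict Implicit. Unset Printing Implicit Defensive.
Import GRing.Theory.
Local Open Scope ring_scope.

(* ssrfun's function composition is also called [comp]. *)
Local Notation comp := Defs.comp.

Lemma In_nth (T : Type) (x0 : T) (s : seq T) i :
  (i < size s)%N -> List.In (nth x0 s i) s.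
Proof. by elim: s i => [|x s IHs] [|i] //= lti; [left | right; exact: IHs]. Qed.

Lemma eq_bigl_In (R : Type) (idx : R) (op : R -> R -> R) (I : Type) (s : seq I)
    (P1 P2 : pred I) (F : I -> R) :
  (forall i, List.In i s -> P1 i = P2 i) ->
  \big[op/idx]_(i <- s | P1 i) F i = \big[op/idx]_(i <- s | P2 i) F i.
Proof.
elim: s => [|i s IHs] eqP12; first by rewrite !big_nil.
by rewrite !big_cons eqP12 ?IHs //; [move=> j sj; apply: eqP12; right | left].
Qed.

Lemma zmod_morphism0 (U U' : zmodType) (f : U -> U') : zmod_morphism f -> f 0 = 0.
Proof. by move=> fB; rewrite -(subrr 0) fB subrr. Qed.

Section SubgroupPred.
Variables (V : zmodType) (S : V -> Prop).

Definition subgroup_pred := S 0 /\ forall x y, S x -> S y -> S (x - y).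

Hypothesis HS : subgroup_pred.

Lemma subgroup0 : S 0. Proof. by case: HS. Qed.
Lemma subgroupB x y : S x -> S y -> S (x - y). Proof. by case: HS => _; apply. Qed.
Lemma subgroupN x : S x -> S (- x).
Proof. by move=> Sx; rewrite -sub0r; apply: subgroupB => //; exact: subgroup0. Qed.
Lemma subgroupD x y : S x -> S y -> S (x + y).
Proof. by move=> Sx Sy; rewrite -[y]opprK; apply: subgroupB => //; exact: subgroupN. Qed.

End SubgroupPred.

Section Sums.
Variables (k : fieldType) (M : lmodType k) (T : Type) (N : M -> Prop).
Hypothesis HN : subgroup_pred N.
Implicit Types (P : T -> Prop) (W : T -> M -> Prop).

Definition family_in P W (t : seq (T * M)) :=
  forall p, List.In p t -> P p.1 /\ W p.1 p.2.

Definition independent P W :=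
  forall n (j : 'I_n -> T) (w : 'I_n -> M), injective j ->
    (forall i, P (j i) /\ W (j i) (w i)) -> N (\sum_(i < n) w i) -> forall i, N (w i).

Lemma sumspE P W x :
  sumsp N P W x <-> exists t, family_in P W t /\ N (x - \sum_(p <- t) p.2).
Proof.
split=> [[n [j [w [jw xN]]]] | [[|p0 t] [tPW xN]]].
- exists [seq (j i, w i) | i <- enum 'I_n]; split; last by rewrite big_map big_enum.
  by move=> p /List.in_map_iff [i [<- _]]; exact: jw.
- exists 0%N, (fun i : 'I_0 => False_rect T (notF (ltn_ord i))).
  by exists (fun _ => 0); split; [case | rewrite big_ord0; rewrite big_nil in xN].
- exists (size (p0 :: t)), (fun i => (nth p0 (p0 :: t) i).1).
  exists (fun i => (nth p0 (p0 :: t) i).2); split; first by move=> i; apply/tPW/In_nth.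
  by rewrite (big_nth p0) big_mkord in xN.
Qed.

Lemma sumsp0 P W : sumsp N P W 0.
Proof. by apply/sumspE; exists [::]; rewrite big_nil subr0; split => //; exact: subgroup0. Qed.

Lemma sumspD P W x y : sumsp N P W x -> sumsp N P W y -> sumsp N P W (x + y).
Proof.
move=> /sumspE [t1 [t1PW xN]] /sumspE [t2 [t2PW yN]]; apply/sumspE; exists (t1 ++ t2).
split; first by move=> p /List.in_app_iff [tp | tp]; [exact: t1PW | exact: t2PW].
by rewrite big_cat opprD addrACA; exact: subgroupD.
Qed.

Lemma sumspN P W x : (forall c, P c -> subgroup_pred (W c)) ->
  sumsp N P W x -> sumsp N P W (- x).
Proof.
move=> HW /sumspE [t [tPW xN]]; apply/sumspE; exists [seq (p.1, - p.2) | p <- t].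
split; last by rewrite big_map sumrN -opprD; exact: subgroupN.
move=> p /List.in_map_iff [q [<- tq]] /=; have [Pq Wq] := tPW q tq.
by split=> //; apply: (subgroupN (HW _ Pq)).
Qed.

Lemma sumsp_sum P W (I : Type) (s : seq I) (a : pred I) (F : I -> M) :
  (forall i, List.In i s -> a i -> sumsp N P W (F i)) ->
  sumsp N P W (\sum_(i <- s | a i) F i).
Proof.
elim: s => [|i s IHs] sF; first by rewrite big_nil; exact: sumsp0.
rewrite big_cons; have {}IHs : sumsp N P W (\sum_(j <- s | a j) F j).
  by apply: IHs => j sj; apply: sF; right.
by case: ifP => // ai; apply: sumspD => //; apply: sF => //; left.
Qed.

Lemma sumsp1 P W c x : P c -> W c x -> sumsp N P W x.
Proof.
move=> Pc Wcx; apply/sumspE; exists [:: (c, x)].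
by rewrite big_seq1 subrr; split; [move=> p [<- | []] | exact: subgroup0].
Qed.

Lemma sumsp_modN P W x y : N (x - y) -> sumsp N P W y -> sumsp N P W x.
Proof.
move=> xyN /sumspE [t [tPW yN]]; apply/sumspE; exists t; split=> //.
by rewrite -(subrK y x) -addrA; exact: subgroupD.
Qed.

Lemma sumspS P P' W x :
  (forall c, P c -> P' c) -> sumsp N P W x -> sumsp N P' W x.
Proof.
by move=> PP' [n [j [w [jw xN]]]]; exists n, j, w; split=> // i; have [] := jw i; auto.
Qed.

Lemma sumsp_support P W x :
  sumsp N P W x -> sumsp N (fun c => P c /\ exists y, W c y /\ ~ N y) W x.
Proof.
move=> /sumspE [t [tPW xN]].
pose a (p : T * M) := `[< ~ N p.2 >].
have aN : N (x - \sum_(p <- t | a p) p.2).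
  have -> : x - \sum_(p <- t | a p) p.2 =
            x - \sum_(p <- t) p.2 + \sum_(p <- t | ~~ a p) p.2.
    by rewrite [\sum_(p <- t) _](bigID a) /= opprD addrA subrK.
  apply: (subgroupD HN xN); apply: big_ind => [|u v|p /asboolPn /contrapT] //.
    exact: subgroup0.
  exact: subgroupD.
apply: (sumsp_modN aN); apply: sumsp_sum => p tp /asboolP Np; have [Pp Wp] := tPW p tp.
by apply: (@sumsp1 _ _ p.1) => //; split=> //; exists p.2.
Qed.

Lemma sumsp_split P W (Q : T -> Prop) x : sumsp N P W x ->
  exists u1 u2, sumsp N (fun c => P c /\ Q c) W u1 /\
                sumsp N (fun c => P c /\ ~ Q c) W u2 /\ x = u1 + u2.
Proof.
move=> /sumspE [t [tPW xN]]; pose a (p : T * M) := `[< Q p.1 >].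
exists (\sum_(p <- t | a p) p.2), (x - \sum_(p <- t | a p) p.2).
split; [|split; last by rewrite addrC subrK].
  apply: sumsp_sum => p tp /asboolP Qp; have [Pp Wp] := tPW p tp.
  exact: (@sumsp1 _ _ p.1).
apply: (sumsp_modN (y := \sum_(p <- t | ~~ a p) p.2)).
  by move: xN; rewrite [\sum_(p <- t) _](bigID a) /= opprD addrA.
apply: sumsp_sum => p tp /asboolPn Qp; have [Pp Wp] := tPW p tp.
exact: (@sumsp1 _ _ p.1).
Qed.

Section Independent.
Variables (P : T -> Prop) (W : T -> M -> Prop).
Hypotheses (HW : forall c, P c -> subgroup_pred (W c)) (Hind : independent P W).

(* Terms with equal indices are merged one pair at a time until the indexing is injective. *)
Lemma independent_filter_ord n (j : 'I_n -> T) (w : 'I_n -> M) :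
  (forall i, P (j i) /\ W (j i) (w i)) -> N (\sum_(i < n) w i) ->
  forall Q : pred T, N (\sum_(i < n | Q (j i)) w i).
Proof.
elim: n j w => [|n IHn] j w jw sumN Q; first by rewrite big_ord0; exact: subgroup0.
have [j_inj | /existsNP [i1 /existsNP [i2 /not_implyP [j12 ne12]]]] := pselect (injective j).
  apply: big_ind => [|u v|i _]; [exact: subgroup0 | exact: subgroupD |].
  exact: Hind j_inj jw sumN i.
have /unlift_some [i0 i1E _] : i2 != i1 by apply/eqP => E; apply: ne12.
pose j' i := j (lift i2 i).
pose w' i := w (lift i2 i) + (if i == i0 then w i2 else 0).
have merge (R : pred T) : \sum_(i < n | R (j' i)) w' i = \sum_(i < n.+1 | R (j i)) w i.
  rewrite big_mkcond [RHS]big_mkcond (bigD1_ord i2) //= addrC.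
  transitivity (\sum_(i < n) ((if R (j' i) then w (lift i2 i) else 0) +
                (if i == i0 then if R (j i2) then w i2 else 0 else 0))).
    apply: eq_bigr => i _; rewrite /w'; case: eqP => [-> | _]; last by rewrite !addr0.
    by rewrite /j' -i1E j12; case: (R _); rewrite ?addr0.
  by rewrite big_split /= -!big_mkcond big_pred1_eq.
rewrite -merge; apply: IHn; last by rewrite (merge xpredT).
move=> i; rewrite /j' /w'; case: eqP => [-> | _]; last by rewrite addr0; exact: jw.
rewrite -i1E; have [Pj1 Wj1] := jw i1; have [_ Wj2] := jw i2.
by split=> //; apply: (subgroupD (HW Pj1) Wj1); rewrite j12.
Qed.

Lemma independent_filter t : family_in P W t -> N (\sum_(p <- t) p.2) ->
  forall Q : pred T, N (\sum_(p <- t | Q p.1) p.2).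
Proof.
case: t => [|p0 t] tPW sumN Q; first by rewrite big_nil; exact: subgroup0.
rewrite (big_nth p0) big_mkord in sumN; rewrite (big_nth p0) big_mkord.
apply: (independent_filter_ord (j := fun i => (nth p0 (p0 :: t) i).1)) => // i.
exact/tPW/In_nth.
Qed.

Lemma sumsp_disjoint (P1 P2 : T -> Prop) x :
  (forall c, P1 c -> P c) -> (forall c, P2 c -> P c) -> (forall c, P1 c -> P2 c -> False) ->
  sumsp N P1 W x -> sumsp N P2 W x -> N x.
Proof.
move=> P1P P2P P12 /sumspE [t1 [t1PW xN1]] /sumspE [t2 [t2PW xN2]].
pose t := t1 ++ [seq (p.1, - p.2) | p <- t2].
have tPW : family_in P W t.
  move=> p /List.in_app_iff [tp | /List.in_map_iff [q [<- tq]]] /=.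
    by have [/P1P] := t1PW p tp.
  by have [/P2P Pq Wq] := t2PW q tq; split=> //; apply: (subgroupN (HW Pq)).
have sumN : N (\sum_(p <- t) p.2).
  have := subgroupB HN xN2 xN1.
  by rewrite opprB addrC addrA subrK big_cat big_map sumrN.
have := independent_filter tPW sumN (fun c => `[< P1 c >]).
rewrite big_cat big_map sumrN /= (@eq_bigl_In _ _ _ _ t1 _ xpredT); last first.
  by move=> p tp; apply/asboolP; have [] := t1PW p tp.
rewrite (@eq_bigl_In _ _ _ _ t2 _ xpred0) ?big_pred0_eq ?subr0 => [sum1N|p tp].
  by rewrite -(subrK (\sum_(p <- t1) p.2) x); exact: subgroupD.
by apply/asboolP; have [P2p _] := t2PW p tp; move/P12; apply.
Qed.

Lemma sumsp_component_index (P' : T -> Prop) c y :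
  (forall c, P' c -> P c) -> P c -> W c y -> ~ N y -> sumsp N P' W y -> P' c.
Proof.
move=> P'P Pc Wcy yN yP'; apply: contrapT => P'c; apply: yN.
apply: (@sumsp_disjoint (eq^~ c) P') => // [_ -> // | _ -> // |].
exact: (sumsp1 (P := eq^~ c) erefl Wcy).
Qed.

End Independent.

End Sums.

Lemma sumsp_bind (k : fieldType) (M M' : lmodType k) (T T' : Type)
    (N : M -> Prop) (N' : M' -> Prop) (P : T -> Prop) (W : T -> M -> Prop)
    (P' : T' -> Prop) (W' : T' -> M' -> Prop) (f : M -> M') :
  subgroup_pred N' -> zmod_morphism f -> (forall x, N x -> N' (f x)) ->
  (forall c x, P c -> W c x -> sumsp N' P' W' (f x)) ->
  forall x, sumsp N P W x -> sumsp N' P' W' (f x).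
Proof.
move=> HN' fB fN fW x /sumspE [t [tPW xN]].
pose fA : {additive M -> M'} := HB.pack f (GRing.isZmodMorphism.Build M M' f fB).
apply: (sumsp_modN HN' (y := \sum_(p <- t) f p.2)).
  by rewrite -(raddf_sum fA) -(raddfB fA); exact: fN.
by apply: (sumsp_sum HN') => p tp _; have [] := tPW p tp; exact: fW.
Qed.

Section IdealProducts.
Variables (k : fieldType) (A : algType k).
Implicit Types (I J m : A -> Prop) (x y : A).

Lemma idealMul0 I J : idealMul I J 0.
Proof. by exists 0%N, (fun _ => 0), (fun _ => 0); rewrite big_ord0; split=> // -[]. Qed.

Lemma idealMulD I J x y : idealMul I J x -> idealMul I J y -> idealMul I J (x + y).
Proof.
move=> [n1 [a1 [b1 [ab1 ->]]]] [n2 [a2 [b2 [ab2 ->]]]].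
pose cat (f1 : 'I_n1 -> A) (f2 : 'I_n2 -> A) i :=
  match split i with inl i1 => f1 i1 | inr i2 => f2 i2 end.
exists (n1 + n2)%N, (cat a1 a2), (cat b1 b2); split.
  by move=> i; rewrite /cat; case: (split i).
rewrite big_split_ord; congr (_ + _); apply: eq_bigr => i _.
  by rewrite /cat (unsplitK (inl _ i)).
by rewrite /cat (unsplitK (inr _ i)).
Qed.

Lemma idealMulMl I J c x :
  (forall a, I a -> I (c * a)) -> idealMul I J x -> idealMul I J (c * x).
Proof.
move=> Ic [n [a [b [ab ->]]]]; exists n, (fun i => c * a i), b; split.
  by move=> i; have [Ia Jb] := ab i; split=> //; exact: Ic.
by rewrite mulr_sumr; apply: eq_bigr => i _; rewrite mulrA.
Qed.

Lemma idealMulSr I J J' x :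
  (forall y, J y -> J' y) -> idealMul I J x -> idealMul I J' x.
Proof.
move=> JJ' [n [a [b [ab ->]]]]; exists n, a, b; split=> // i.
by have [Ia Jb] := ab i; split=> //; exact: JJ'.
Qed.

Lemma leftIdealE J x : leftIdeal J x <-> idealMul (fun _ => True) J x.
Proof. by split=> -[n [a [b [ab ->]]]]; exists n, a, b; split=> // i; have [] := ab i. Qed.

Lemma leftIdeal_subgroup J : subgroup_pred (leftIdeal J).
Proof.
split=> [|x y /leftIdealE Jx /leftIdealE Jy]; apply/leftIdealE; first exact: idealMul0.
by apply: idealMulD Jx _; rewrite -mulN1r; exact: idealMulMl.
Qed.

Lemma leftIdealS J J' x : (forall y, J y -> J' y) -> leftIdeal J x -> leftIdeal J' x.
Proof. by move=> JJ' /leftIdealE Jx; apply/leftIdealE; exact: idealMulSr Jx. Qed.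

Lemma leftIdealMr m J u b : leftIdeal m u -> J b -> leftIdeal (idealMul m J) (u * b).
Proof.
move=> [n [a [g [mg ->]]]] Jb; exists n, a, (fun i => g i * b); split.
  move=> i; exists 1%N, (fun _ => g i), (fun _ => b).
  by rewrite big_ord1; split.
by rewrite mulr_suml; apply: eq_bigr => i _; rewrite mulrA.
Qed.

Variable G : A -> Prop.
Hypothesis HG : is_subalgebra G.

Definition is_left_ideal J := [/\ forall x, J x -> G x, J 0,
  (forall x y, J x -> J y -> J (x + y)) & (forall g x, G g -> J x -> J (g * x))].

Lemma subalgebra_left_ideal : is_left_ideal G.
Proof. by case: HG => G0 _ GD _ GM; split. Qed.

Lemma idealMul_left_ideal m J : is_ideal G m -> is_left_ideal J -> is_left_ideal (idealMul m J).
Proof.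
move=> [mG _ _ mMl _] [JG _ _ _]; split=> [x [n [a [b [ab ->]]]]| | |g x Gg].
- have [G0 _ GD _ GM] := HG; apply: big_ind => // i _.
  by have [ma Jb] := ab i; apply: GM; [exact: mG | exact: JG].
- exact: idealMul0.
- exact: idealMulD.
- by apply: idealMulMl => a; exact: mMl.
Qed.

Lemma idealMul_subr m J x : is_ideal G m -> is_left_ideal J -> idealMul m J x -> J x.
Proof.
move=> [mG _ _ _ _] [_ J0 JD JM] [n [a [b [ab ->]]]]; apply: big_ind => // i _.
by have [ma Jb] := ab i; apply: JM => //; exact: mG.
Qed.

Lemma idealMulG m : is_ideal G m -> idealMul m G = m.
Proof.
move=> mI; have [_ m0 mB _ mMr] := mI; apply/funext => x; apply/propext; split.
  move=> [n [a [b [ab ->]]]]; apply: big_ind => // [u v mu mv|i _].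
    by have := mB u (0 - v) mu (mB _ _ m0 mv); rewrite sub0r opprK.
  by have [ma Gb] := ab i; exact: mMr.
move=> mx; exists 1%N, (fun _ => x), (fun _ => 1); rewrite big_ord1 mulr1.
by case: HG => _ G1 _ _ _; split.
Qed.

Lemma iprod_left_ideal s : (forall m, List.In m s -> is_ideal G m) -> is_left_ideal (iprod G s).
Proof.
elim: s => [|m s IHs] sI /=; first exact: subalgebra_left_ideal.
by apply: idealMul_left_ideal; [apply: sI; left | apply: IHs => m' sm'; apply: sI; right].
Qed.

Lemma iprod_catl s1 s2 x : (forall m, List.In m s2 -> is_ideal G m) ->
  iprod G (s1 ++ s2) x -> iprod G s1 x.
Proof.
move=> s2I; elim: s1 x => [|m s1 IHs1] x /=; last exact: idealMulSr.
by have [] := iprod_left_ideal s2I; auto.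
Qed.

Lemma iprod_catr s1 s2 x : (forall m, List.In m (s1 ++ s2) -> is_ideal G m) ->
  iprod G (s1 ++ s2) x -> iprod G s2 x.
Proof.
elim: s1 x => [|m s1 IHs1] x //= sI mx; apply: IHs1 => [m' sm'|].
  by apply: sI; right.
apply: idealMul_subr mx; first by apply: sI; left.
by apply: iprod_left_ideal => m' sm'; apply: sI; right.
Qed.

End IdealProducts.

Section Components.
Variables (k : fieldType) (A : algType k) (G : A -> Prop)
  (sim : (A -> Prop) -> (A -> Prop) -> Prop).

Lemma isClass_ideal B m : isClass G sim B -> B m -> is_ideal G m.
Proof. by move=> [m0 [_ ->]] [[[]]]. Qed.

Lemma comp_map (M M' : lmodType k) (act : A -> M -> M) (act' : A -> M' -> M')
    (N : M -> Prop) (N' : M' -> Prop) (f : M -> M') B x :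
  (forall y, N y -> N' (f y)) -> (forall g y, f (act g y) = act' g (f y)) ->
  comp G act N B x -> comp G act' N' B (f x).
Proof. by move=> fN fact [I [WI xI]]; exists I; split=> // g Ig; rewrite -fact; exact/fN/xI. Qed.

Hypothesis HG : is_subalgebra G.
Variables (M : lmodType k) (act : A -> M -> M) (N : M -> Prop).
Hypotheses (HN : subgroup_pred N) (actB : forall g, zmod_morphism (act g)).

Lemma comp_subgroup B : isClass G sim B -> subgroup_pred (comp G act N B).
Proof.
move=> HB; split.
  exists G; split; first by exists [::].
  by move=> g _; rewrite zmod_morphism0 //; exact: subgroup0.
move=> x y [I1 [[s1 [s1B ->]] xI]] [I2 [[s2 [s2B ->]] yI]].
have s2I m : List.In m s2 -> is_ideal G m by move=> /s2B; exact: isClass_ideal.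
have s12I m : List.In m (s1 ++ s2) -> is_ideal G m.
  by move=> /List.in_app_iff [/s1B | /s2B]; exact: isClass_ideal.
exists (iprod G (s1 ++ s2)); split.
  by exists (s1 ++ s2); split=> // m /List.in_app_iff [/s1B | /s2B].
move=> g g12; rewrite actB; apply: (subgroupB HN).
  by apply: xI; exact: iprod_catl g12.
by apply: yI; exact: iprod_catr g12.
Qed.

End Components.

Section HarishChandra.
Variables (k : fieldType) (A : algType k) (G : A -> Prop)
  (sim : (A -> Prop) -> (A -> Prop) -> Prop).
Hypotheses (HG : is_subalgebra G) (HHC : HC_block_subalgebra G sim).

Notation cls := (isClass G sim).
Notation Acomp I := (comp G (@lmul _ A) (leftIdeal I)).

Lemma lmulB g : zmod_morphism (@lmul _ A g).
Proof. by move=> x y; rewrite /lmul mulrBr. Qed.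

Lemma leftIdeal_comp_subgroup I B : cls B -> subgroup_pred (Acomp I B).
Proof. by move=> HB; apply: (comp_subgroup HG (leftIdeal_subgroup I) lmulB HB). Qed.

Lemma sumsp_prec_gen B m : cls B -> B m ->
  forall a, sumsp (leftIdeal m) (prec_gen G sim B) (Acomp m) a.
Proof.
move=> HB Bm a; have Wm : Wprod G B m.
  exists [:: m]; rewrite /= idealMulG //; last exact: isClass_ideal HB Bm.
  by split=> // m' [<- | []].
have [cover _] := HHC HB Wm.
apply: (sumspS _ (sumsp_support (leftIdeal_subgroup _) (cover a))) => C SuppC.
by split=> //; split; [case: SuppC | exists m].
Qed.

Lemma sumsp_prec_gen_mulr B m J b : cls B -> B m -> J b ->
  forall a, sumsp (leftIdeal (idealMul m J)) (prec_gen G sim B) (Acomp (idealMul m J)) (a * b).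
Proof.
move=> HB Bm Jb a; move: (sumsp_prec_gen HB Bm a).
apply: (sumsp_bind (f := fun u => u * b)) => [|u v|u um|c u Pc uc].
- exact: leftIdeal_subgroup.
- by rewrite mulrBl.
- exact: leftIdealMr um Jb.
apply: (sumsp1 (leftIdeal_subgroup _) Pc).
apply: (comp_map (f := fun z => z * b) _ _ uc) => [z zm | g z].
  exact: leftIdealMr zm Jb.
by rewrite /lmul mulrA.
Qed.

Lemma Supp_iprod_prec B s : cls B -> (forall m, List.In m s -> B m) ->
  forall C, Supp G sim (@lmul _ A) (leftIdeal (iprod G s)) C -> prec G sim B C.
Proof.
move=> HB; elim: s => [|m s IHs] sB C [HC [y [yC yN]]].
  case: yN; exists 1%N, (fun _ => y), (fun _ => 1); rewrite big_ord1 mulr1.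
  by split=> //; case: HG.
have sI m' : List.In m' s -> is_ideal G m' by move=> sm'; apply/(isClass_ideal HB)/sB; right.
have mI : is_ideal G m by apply/(isClass_ideal HB)/sB; left.
have [ys | ys] := pselect (leftIdeal (iprod G s) y); last first.
  apply: IHs => [m' sm' | ]; first by apply: sB; right.
  split=> //; exists y; split=> //; apply: comp_map yC => // x.
  by apply: leftIdealS => z /(idealMul_subr mI (iprod_left_ideal HG sI)).
apply: rt_step; have Ws : Wprod G B (iprod G (m :: s)) by exists (m :: s).
apply: (sumsp_component_index (leftIdeal_subgroup _) _ (HHC HB Ws).2 _ HC yC yN).
- by move=> c; exact: leftIdeal_comp_subgroup.
- by move=> c [_ []].
case: ys => n [a [b [bs ->]]]; apply: big_ind => [|u v|i _].
- exact: (sumsp0 (leftIdeal_subgroup _)).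
- exact: (sumspD (leftIdeal_subgroup _)).
exact: sumsp_prec_gen_mulr HB (sB m (or_introl erefl)) (bs i) (a i).
Qed.

Lemma sumsp_Wprod_prec B I : cls B -> Wprod G B I ->
  forall a, sumsp (leftIdeal I) (fun C => cls C /\ prec G sim B C) (Acomp I) a.
Proof.
move=> HB WI a; have [cover _] := HHC HB WI.
apply: (sumspS _ (sumsp_support (leftIdeal_subgroup _) (cover a))) => C SuppC.
split; first by case: SuppC.
by case: WI SuppC => s [sB ->]; exact: Supp_iprod_prec.
Qed.

End HarishChandra.

Section Modules.
Variables (k : fieldType) (A : algType k) (G : A -> Prop)
  (sim : (A -> Prop) -> (A -> Prop) -> Prop).
Hypotheses (HG : is_subalgebra G) (HHC : HC_block_subalgebra G sim).
Variables (V : lmodType k) (act : A -> V -> V).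
Hypothesis HV : is_Amodule act.

Notation cls := (isClass G sim).
Notation Vcomp := (comp G act (zeroV (V:=V))).

Lemma zeroV_subgroup : subgroup_pred (zeroV (V:=V)).
Proof. by split=> // x y -> ->; rewrite subr0. Qed.

Lemma actBr a : zmod_morphism (act a).
Proof.
case: HV => [[actD _] _ _ _ _] x y; apply: (addIr (act a y)).
by rewrite -actD !subrK.
Qed.

Lemma actBl x : zmod_morphism (act^~ x).
Proof.
case: HV => _ actDl _ _ _ a b /=; apply: (addIr (act b x)).
by rewrite -actDl !subrK.
Qed.

Lemma act_leftIdeal_ann I x r :
  (forall g, I g -> act g x = 0) -> leftIdeal I r -> act r x = 0.
Proof.
case: HV => _ _ _ _ actM xI [n [a [g [Ig ->]]]].
pose actx : {additive A -> V} := HB.pack (act^~ x) (GRing.isZmodMorphism.Build _ _ _ (actBl x)).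
rewrite -[act _ x]/(actx _) raddf_sum big1 // => i _.
by rewrite /actx /= actM xI // zmod_morphism0 //; exact: actBr.
Qed.

Lemma VD_act D B x a : (forall C, D C -> cls C) ->
  (forall C C', D C -> prec G sim C C' -> D C') ->
  D B -> Vcomp B x -> VD G act D (act a x).
Proof.
move=> Dcls Dprec DB [I [WI xI]]; move: (sumsp_Wprod_prec HG HHC (Dcls B DB) WI a).
apply: (sumsp_bind (f := act^~ x)) => [|||C u [_ BC] uC].
- exact: zeroV_subgroup.
- exact: actBl.
- by move=> r; exact: act_leftIdeal_ann.
apply: (sumsp1 zeroV_subgroup (Dprec B C DB BC)).
apply: (comp_map (f := act^~ x) _ _ uC) => [r | g r]; first exact: act_leftIdeal_ann.
by case: HV => _ _ _ _ actM; exact: actM.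
Qed.

Lemma VD_submodule D : (forall C, D C -> cls C) ->
  (forall C C', D C -> prec G sim C C' -> D C') -> is_Asubmodule act (VD G act D).
Proof.
move=> Dcls Dprec; split=> [|x y|c x|a x].
- exact: (sumsp0 zeroV_subgroup).
- exact: (sumspD zeroV_subgroup).
- apply: (sumsp_bind (f := fun v => c *: v)) => [|u v|u ->|C u DC uC].
  + exact: zeroV_subgroup.
  + by rewrite scalerBr.
  + by rewrite /zeroV scaler0.
  apply: (sumsp1 zeroV_subgroup DC).
  apply: (comp_map (f := fun v => c *: v) _ _ uC) => [v -> | g v].
    by rewrite /zeroV scaler0.
  by case: HV => [[_ actZ] _ _ _ _].
- apply: (sumsp_bind (f := act a)) => [|||C u DC uC].
  + exact: zeroV_subgroup.
  + exact: actBr.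
  + by move=> u ->; rewrite /zeroV zmod_morphism0 //; exact: actBr.
  exact: VD_act DC uC.
Qed.

Definition Delta_class B C := cls C /\ Delta G sim B C.

Lemma prec_isClass B C : prec G sim B C -> cls B -> cls C.
Proof. by elim=> [B' C' [_ []] | | B1 B2 B3 _ IH12 _ IH23] //; auto. Qed.

Lemma prec_Delta B C : prec G sim B C -> Delta G sim B C.
Proof. exact: clos_rt_clos_rst. Qed.

Lemma Delta_class_prec_closed B C C' :
  Delta_class B C -> prec G sim C C' -> Delta_class B C'.
Proof.
move=> [HC BC] CC'; split; first exact: prec_isClass CC' HC.
exact: rst_trans BC (prec_Delta CC').
Qed.

Lemma Delta_class_eq B1 B2 C :
  Delta_class B1 C -> Delta_class B2 C -> Delta_class B1 = Delta_class B2.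
Proof.
move=> [_ B1C] [_ B2C]; have B12 := rst_trans _ _ _ _ _ B1C (rst_sym _ _ _ _ B2C).
apply/funext => C'; apply/propext; split=> -[HC' BC']; split=> //.
  exact: rst_trans (rst_sym _ _ _ _ B12) BC'.
exact: rst_trans B12 BC'.
Qed.

Let Vcomp_subgroup C : cls C -> subgroup_pred (Vcomp C) :=
  comp_subgroup HG zeroV_subgroup actBr (B:=C).

Hypothesis HVb : block_module G sim act (zeroV (V:=V)).

Lemma VD_Delta_cover x :
  sumsp (zeroV (V:=V)) (fun DD => exists B, cls B /\ DD = Delta_class B) (VD G act) x.
Proof.
move: (HVb.1 x); apply: (sumsp_bind (f := id)) => [|u v|u ->|C u HC uC] //.
- exact: zeroV_subgroup.
apply: (sumsp1 zeroV_subgroup (c := Delta_class C)); first by exists C.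
by apply: (sumsp1 zeroV_subgroup (c := C)) => //; split=> //; exact: rst_refl.
Qed.

Lemma VD_Delta_independent :
  independent (zeroV (V:=V)) (fun DD => exists B, cls B /\ DD = Delta_class B) (VD G act).
Proof.
move=> n j w j_inj jw sum0 i0; have [[B0 [HB0 jB0]] wi0] := jw i0.
pose P2 c := exists2 i, i != i0 & j i c.
have P2cls c : P2 c -> cls c by move=> [i _]; have [[B [_ ->]] _] := jw i; case.
apply: (sumsp_disjoint zeroV_subgroup Vcomp_subgroup HVb.2 (P1 := j i0) (P2 := P2)) => //.
- by rewrite jB0 => c [].
- move=> c j0c [i ne jic]; move/eqP: ne; apply; apply: j_inj.
  have [[B [_ jB]] _] := jw i; rewrite jB jB0 in jic j0c *; exact: Delta_class_eq jic j0c.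
move: sum0; rewrite /zeroV (bigD1 i0) //= => /eqP; rewrite addr_eq0 => /eqP ->.
apply: (sumspN zeroV_subgroup) => [c /P2cls|]; first exact: Vcomp_subgroup.
apply: big_ind => [|u v|i ne]; [exact: (sumsp0 zeroV_subgroup) | exact: (sumspD zeroV_subgroup)|].
by apply: (sumspS _ (jw i).2) => c jic; exists i.
Qed.

Lemma indecomposable_Supp_Delta B C : indecomposable act ->
  Supp G sim act (zeroV (V:=V)) B -> Supp G sim act (zeroV (V:=V)) C -> Delta G sim B C.
Proof.
move=> [_ indec] [HB [x [xB x0]]] [HC [y [yC y0]]].
pose D' C := cls C /\ ~ Delta G sim B C.
have D'closed C1 C2 : D' C1 -> prec G sim C1 C2 -> D' C2.
  move=> [HC1 nBC1] C12; split; first exact: prec_isClass C12 HC1.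
  by move=> BC2; apply: nBC1; exact: rst_trans BC2 (rst_sym _ _ _ _ (prec_Delta C12)).
have disj v : VD G act (Delta_class B) v -> VD G act D' v -> v = 0.
  by apply: (sumsp_disjoint zeroV_subgroup Vcomp_subgroup HVb.2) => [c []|c []|c [_ ?] []].
have [UD0 | UD'0] :=
  indec _ _ (VD_submodule (D := Delta_class B) (fun _ => @proj1 _ _) (@Delta_class_prec_closed B))
            (VD_submodule (D := D') (fun _ => @proj1 _ _) D'closed)
            (fun v => sumsp_split zeroV_subgroup (Delta G sim B) (HVb.1 v)) disj.
- case: x0; apply: UD0; apply: (sumsp1 zeroV_subgroup (c := B)) => //.
  by split=> //; exact: rst_refl.
apply: contrapT => nBC; case: y0; apply: UD'0.
exact: (sumsp1 zeroV_subgroup (c := C)).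
Qed.

Lemma irreducible_Supp_prec B C : irreducible act ->
  Supp G sim act (zeroV (V:=V)) B -> Supp G sim act (zeroV (V:=V)) C -> prec G sim B C.
Proof.
move=> [_ irr] [HB [x [xB x0]]] [HC [y [yC y0]]].
pose D C := cls C /\ prec G sim B C.
have Dclosed C1 C2 : D C1 -> prec G sim C1 C2 -> D C2.
  by move=> [HC1 BC1] C12; split; [exact: prec_isClass C12 HC1 | exact: rt_trans BC1 C12].
have [UD0 | UDT] := irr _ (VD_submodule (D := D) (fun _ => @proj1 _ _) Dclosed).
  case: x0; apply: UD0; apply: (sumsp1 zeroV_subgroup (c := B)) => //.
  by split=> //; exact: rt_refl.
have [] // :=
  sumsp_component_index zeroV_subgroup Vcomp_subgroup HVb.2 (P' := D) _ HC yC y0 (UDT y).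
by move=> c [].
Qed.

End Modules.

Theorem mainTheorem19 (k : fieldType) (A : algType k) (G : A -> Prop)
  (sim : (A -> Prop) -> (A -> Prop) -> Prop)
  (HG : is_subalgebra G) (Hsim : equiv_on (cfs G) sim)
  (HHC : HC_block_subalgebra G sim)
  (V : lmodType k) (act : A -> V -> V)
  (HV : is_Amodule act) (HVb : block_module G sim act (zeroV (V:=V))) :
  (* (i) *)
  (forall D : ((A -> Prop) -> Prop) -> Prop,
     (forall B, D B -> isClass G sim B) ->
     (forall B C, D B -> prec G sim B C -> D C) ->
     is_Asubmodule act (VD G act D)) /\
  (* (ii) *)
  ((forall DD, (exists B, isClass G sim B /\
                  DD = (fun C => isClass G sim C /\ Delta G sim B C)) ->
       is_Asubmodule act (VD G act DD)) /\
   is_dsum (zeroV (V:=V))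
     (fun DD => exists B, isClass G sim B /\
                  DD = (fun C => isClass G sim C /\ Delta G sim B C))
     (VD G act)) /\
  (* (iii) *)
  (indecomposable act -> forall B, Supp G sim act (zeroV (V:=V)) B ->
     forall C, Supp G sim act (zeroV (V:=V)) C -> Delta G sim B C) /\
  (* (iv) *)
  (irreducible act -> forall B, Supp G sim act (zeroV (V:=V)) B ->
     forall C, Supp G sim act (zeroV (V:=V)) C -> nabla G sim B C).
Proof.
have VD_sub := VD_submodule HG HHC HV.
split; first exact: VD_sub.
split.
  split.
    by move=> _ [B [_ ->]]; apply: VD_sub => [C [] | C C' BC /(Delta_class_prec_closed BC)].
  by split; [exact: VD_Delta_cover | exact: VD_Delta_independent].
split=> [indec B SB C SC | irr B SB C SC].
  exact: (indecomposable_Supp_Delta HG HHC HV HVb indec SB SC).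
by split; exact: (irreducible_Supp_prec HG HHC HV HVb irr).
Qed.
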